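(* Let $m\ge 2$ be an integer, let $x_0,\dots,x_N\in[0,1]$ be distinct nodes, and let $$G(x)=\frac{\operatorname{sign}x}{2}\left(\frac{e^x-e^{-x}}{2}-\sum_{k=1}^{m-1}\frac{x^{2k-1}}{(2k-1)!}\right).$$ Let $S$ be the $m\times(N+1)$ matrix whose rows are $(x_0^{\alpha},\dots,x_N^{\alpha})$ for $\alpha=0,1,\dots,m-2$ and, as last row, $(e^{-x_0},\dots,e^{-x_N})$. Define $$\Phi(\overline{\mathbf C})=2(-1)^m\sum_{\beta=0}^N\sum_{\gamma=0}^N G(x_\beta-x_\gamma)\,\overline C_\beta\overline C_\gamma,\qquad \overline{\mathbf C}=(\overline C_0,\dots,\overline C_N)\in\mathbb R^{N+1}.$$ Then for every nonzero vector $\overline{\mathbf C}\in\mathbb R^{N+1}$ with $S\overline{\mathbf C}=0$, one has $\Phi(\overline{\mathbf C})>0$.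
   Context: Here $\Phi$ is (up to the factor in the Lagrange function) the quadratic form arising from the squared norm of the error functional of a quadrature formula $\int_0^1\varphi\,dx\cong\sum_\beta C_\beta\varphi(x_\beta)$ in the space $W_2^{(m,m-1)}(0,1)$ with norm $\left(\int_0^1(\varphi^{(m)}+\varphi^{(m-1)})^2dx\right)^{1/2}$; the condition $S\overline{\mathbf C}=0$ means $\sum_\gamma\overline C_\gamma x_\gamma^\alpha=0$ for $\alpha=0,\dots,m-2$ and $\sum_\gamma\overline C_\gamma e^{-x_\gamma}=0$. *)

From Stdlib Require Import Reals Lra Lia Factorial.
Open Scope R_scope.

Definition sgn (x : R) : R :=
  if Rlt_dec 0 x then 1 else if Rlt_dec x 0 then -1 else 0.

Definition Gfun (m : nat) (x : R) : R :=
  sgn x / 2 *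
  ((exp x - exp (- x)) / 2
   - sum_f 1 (m - 1) (fun k => x ^ (2 * k - 1) / INR (fact (2 * k - 1)))).

Definition Phi (m N : nat) (x C : nat -> R) : R :=
  2 * (-1) ^ m *
  sum_f_R0 (fun b => sum_f_R0 (fun g => Gfun m (x b - x g) * C b * C g) N) N.

Definition S_kernel (m N : nat) (x C : nat -> R) : Prop :=
  (forall alpha : nat, (alpha <= m - 2)%nat ->
     sum_f_R0 (fun g => C g * x g ^ alpha) N = 0) /\
  sum_f_R0 (fun g => C g * exp (- x g)) N = 0.

(* Put n = m - 1, let r_p(s) = e^s - sum_(k<p) s^k/k! be the Taylor remainders of exp
   ([exp_rem]) and k(t) = sum_g C_g [t < x_g] r_n(t - x_g) ([kern]). The constraints S C = 0
   say exactly that sum_g C_g r_p(a - x_g) = 0 for every a and p <= n. The derivatives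
   G^(j), j < 2n, are sgn(s)/2 times the even or odd part of r_(2n-j) ([Gder]), so for
   u = sum_g C_g G(. - x_g) the constraints give u^(n+1) + u^(n) = -k. Hence
   k^2 = - sum_b C_b [t < x_b] r_n(t - x_b) (u^(n+1) + u^(n)), and integrating by parts
   n times on each [0, x_b] (the boundary terms at 0 cancel by the constraints) gives
   int_0^1 k^2 = (-1)^m sum_b C_b u(x_b) = Phi / 2; the integral is realised by an explicit
   antiderivative ([kern_sq_primitive]). It is positive: just left of the rightmost node
   x_b with C_b <> 0, k = C_b r_n(. - x_b), and r_n has the constant sign (-1)^n on
   (-oo, 0). *)

From Stdlib Require Import Reals Lra Lia Factorial.
From Coquelicot Require Import Coquelicot.
Open Scope R_scope.

Lemma is_derive_plus_R (f g : R -> R) t a b :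
  is_derive f t a -> is_derive g t b -> is_derive (fun s => f s + g s) t (a + b).
Proof. exact (is_derive_plus f g t a b). Qed.

Lemma is_derive_minus_R (f g : R -> R) t a b :
  is_derive f t a -> is_derive g t b -> is_derive (fun s => f s - g s) t (a - b).
Proof. exact (is_derive_minus f g t a b). Qed.

Lemma is_derive_mult_R (f g : R -> R) t a b :
  is_derive f t a -> is_derive g t b ->
  is_derive (fun s => f s * g s) t (a * g t + f t * b).
Proof. intros Hf Hg. exact (is_derive_mult f g t a b Hf Hg Rmult_comm). Qed.

Lemma is_derive_comp_affine (f : R -> R) (u c t a : R) :
  is_derive f (u * t + c) a -> is_derive (fun s => f (u * s + c)) t (u * a).
Proof.
  intros Hf.
  assert (Hlin : is_derive (fun s => u * s + c) t u).
  { auto_derive; [easy | ring]. }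
  exact (is_derive_comp f (fun s => u * s + c) t a u Hf Hlin).
Qed.

Lemma is_derive_shift (f : R -> R) (c t a : R) :
  is_derive f (t - c) a -> is_derive (fun s => f (s - c)) t a.
Proof.
  intros Hf. rewrite <- (Rmult_1_l a).
  eapply is_derive_ext; [|apply (is_derive_comp_affine f 1 (- c))].
  - intros s. simpl. now replace (1 * s + - c) with (s - c) by ring.
  - now replace (1 * t + - c) with (t - c) by ring.
Qed.

Lemma is_derive_opp_arg (f : R -> R) (t a : R) :
  is_derive f (- t) a -> is_derive (fun s => f (- s)) t (- a).
Proof.
  intros Hf. replace (- a) with (-1 * a) by ring.
  eapply is_derive_ext; [|apply (is_derive_comp_affine f (-1) 0)].
  - intros s. simpl. now replace (-1 * s + 0) with (- s) by ring.
  - now replace (-1 * t + 0) with (- t) by ring.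
Qed.

Lemma is_derive_sum_f_R0 (f : nat -> R -> R) (df : nat -> R) N t :
  (forall i, (i <= N)%nat -> is_derive (f i) t (df i)) ->
  is_derive (fun s => sum_f_R0 (fun i => f i s) N) t (sum_f_R0 df N).
Proof.
  induction N as [|N IH]; intros Hd; simpl.
  - apply Hd; lia.
  - apply (is_derive_plus_R (fun s => sum_f_R0 (fun i => f i s) N) (f (S N))).
    + apply IH; intros i Hi; apply Hd; lia.
    + apply Hd; lia.
Qed.

Lemma is_derive_dominated_0 (f u : R -> R) a :
  (forall t, Rabs (f t) <= Rabs (u t)) -> u a = 0 -> is_derive u a 0 -> is_derive f a 0.
Proof.
  intros Hfu Hua Hu. apply is_derive_Reals. apply is_derive_Reals in Hu.
  assert (Hfa : f a = 0).
  { apply Rabs_eq_0, Rle_antisym; [|apply Rabs_pos].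
    rewrite <- Rabs_R0, <- Hua. apply Hfu. }
  intros eps Heps. destruct (Hu eps Heps) as [d Hd]. exists d. intros h Hh Hhd.
  specialize (Hd h Hh Hhd). rewrite Hua in Hd. rewrite Hfa.
  unfold Rdiv in *. rewrite !Rminus_0_r, Rabs_mult in *.
  eapply Rle_lt_trans; [|exact Hd].
  apply Rmult_le_compat_r; [apply Rabs_pos | apply Hfu].
Qed.

Lemma is_derive_nonneg_le (f df : R -> R) a b :
  (forall t, is_derive f t (df t)) -> (forall t, 0 <= df t) -> a <= b -> f a <= f b.
Proof.
  intros Hd Hpos Hab. destruct (Rle_lt_or_eq_dec a b Hab) as [Hlt | ->]; [|lra].
  destruct (MVT_cor2 f df a b Hlt) as [c [Hc _]].
  { intros c _. apply is_derive_Reals, Hd. }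
  pose proof (Hpos c). nra.
Qed.

Lemma is_derive_pos_lt (f df : R -> R) lo a b hi :
  (forall t, is_derive f t (df t)) -> (forall t, 0 <= df t) ->
  (forall t, a < t < b -> 0 < df t) ->
  lo <= a -> a < b -> b <= hi -> f lo < f hi.
Proof.
  intros Hd Hpos Hstrict Hlo Hab Hhi.
  destruct (MVT_cor2 f df a b Hab) as [c [Hc Hcab]].
  { intros c _. apply is_derive_Reals, Hd. }
  pose proof (Hstrict c Hcab).
  pose proof (is_derive_nonneg_le f df lo a Hd Hpos Hlo).
  pose proof (is_derive_nonneg_le f df b hi Hd Hpos Hhi).
  nra.
Qed.

Lemma sum_f_R0_single (f : nat -> R) N b :
  (b <= N)%nat -> (forall i, (i <= N)%nat -> i <> b -> f i = 0) -> sum_f_R0 f N = f b.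
Proof.
  intros Hb H0. induction N as [|N IH]; simpl.
  - now replace b with 0%nat by lia.
  - destruct (Nat.eq_dec b (S N)) as [-> | Hne].
    + rewrite sum_eq_R0; [ring|]. intros i Hi. apply H0; lia.
    + rewrite IH, (H0 (S N)); [ring | lia | auto | lia | intros i Hi; apply H0; lia].
Qed.

Lemma exists_argmax (P : nat -> Prop) (f : nat -> R) N :
  (forall i, P i \/ ~ P i) ->
  exists b, (b <= N)%nat /\ forall g, (g <= N)%nat -> P g -> P b /\ f g <= f b.
Proof.
  intros Pdec. induction N as [|N [b [Hb Hmax]]].
  - exists 0%nat. split; [lia|]. intros g Hg Pg.
    replace g with 0%nat in * by lia. split; [exact Pg | lra].
  - assert (Hkeep : ~ P (S N) \/ (P b /\ f (S N) <= f b) ->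
                    forall g, (g <= S N)%nat -> P g -> P b /\ f g <= f b).
    { intros Hcase g Hg Pg. destruct (Nat.eq_dec g (S N)) as [-> | Hne]; [tauto|].
      apply Hmax; [lia | exact Pg]. }
    destruct (Pdec (S N)) as [PS | nPS]; [|exists b; split; [lia | tauto]].
    destruct (Pdec b) as [Pb | nPb]; [destruct (Rle_lt_dec (f (S N)) (f b)) as [Hle | Hlt]|].
    + exists b. split; [lia | tauto].
    + exists (S N). split; [lia|]. intros g Hg Pg. split; [exact PS|].
      destruct (Nat.eq_dec g (S N)) as [-> | Hne]; [lra|].
      pose proof (proj2 (Hmax g ltac:(lia) Pg)). lra.
    + exists (S N). split; [lia|]. intros g Hg Pg. split; [exact PS|].
      destruct (Nat.eq_dec g (S N)) as [-> | Hne]; [lra|].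
      exfalso. exact (nPb (proj1 (Hmax g ltac:(lia) Pg))).
Qed.

Lemma exists_gap_below (f : nat -> R) N c :
  exists a, a < c /\ forall g, (g <= N)%nat -> f g < c -> f g <= a.
Proof.
  induction N as [|N [a [Ha Hgap]]].
  - exists (if Rlt_dec (f 0%nat) c then f 0%nat else c - 1).
    destruct (Rlt_dec (f 0%nat) c); split; try lra;
      intros g Hg Hgc; replace g with 0%nat in * by lia; lra.
  - exists (Rmax a (if Rlt_dec (f (S N)) c then f (S N) else a)).
    destruct (Rlt_dec (f (S N)) c) as [Hlt | Hge].
    + split; [now apply Rmax_lub_lt|]. intros g Hg Hgc.
      destruct (Nat.eq_dec g (S N)) as [-> | Hne]; [apply Rmax_r|].
      eapply Rle_trans; [apply Hgap; [lia | exact Hgc] | apply Rmax_l].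
    + rewrite Rmax_left by lra. split; [exact Ha|]. intros g Hg Hgc.
      destruct (Nat.eq_dec g (S N)) as [-> | Hne]; [contradiction | apply Hgap; [lia | exact Hgc]].
Qed.

Lemma sgn_pos s : 0 < s -> sgn s = 1.
Proof. intros Hs. unfold sgn. destruct (Rlt_dec 0 s); [reflexivity | lra]. Qed.

Lemma sgn_neg s : s < 0 -> sgn s = -1.
Proof.
  intros Hs. unfold sgn.
  destruct (Rlt_dec 0 s); [lra|]. destruct (Rlt_dec s 0); [reflexivity | lra].
Qed.

Lemma Rabs_sgn_half_mul_le s w : Rabs (sgn s / 2 * w) <= Rabs w.
Proof. unfold sgn. destruct (Rlt_dec 0 s); [|destruct (Rlt_dec s 0)]; split_Rabs; lra. Qed.

Lemma is_derive_sgn_half_mul (w dw : R -> R) s :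
  (forall t, is_derive w t (dw t)) -> w 0 = 0 -> dw 0 = 0 ->
  is_derive (fun t => sgn t / 2 * w t) s (sgn s / 2 * dw s).
Proof.
  intros Hw Hw0 Hdw0. destruct (Rtotal_order s 0) as [Hs | [Hs | Hs]].
  - apply (is_derive_ext_loc (fun t => -1 / 2 * w t)).
    + apply (filter_imp (fun t => t < 0)); [|exact (open_lt 0 s Hs)].
      intros t Ht. now rewrite sgn_neg.
    + rewrite sgn_neg by exact Hs. apply is_derive_scal, Hw.
  - subst s. rewrite Hdw0, Rmult_0_r. apply (is_derive_dominated_0 _ w).
    + intros t. apply Rabs_sgn_half_mul_le.
    + exact Hw0.
    + rewrite <- Hdw0 at 2. apply Hw.
  - apply (is_derive_ext_loc (fun t => 1 / 2 * w t)).
    + apply (filter_imp (fun t => 0 < t)); [|exact (open_gt 0 s Hs)].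
      intros t Ht. now rewrite sgn_pos.
    + rewrite sgn_pos by exact Hs. apply is_derive_scal, Hw.
Qed.

Fixpoint exp_rem (p : nat) (s : R) : R :=
  match p with
  | O => exp s
  | S q => exp_rem q s - s ^ q / INR (fact q)
  end.

Lemma is_derive_monomial p s :
  is_derive (fun t => t ^ S p / INR (fact (S p))) s (s ^ p / INR (fact p)).
Proof.
  auto_derive; [easy|].
  change (match p with 0%nat => 1 | S _ => INR p + 1 end) with (INR (S p)).
  change (fact p + p * fact p)%nat with (fact (S p)).
  rewrite fact_simpl, mult_INR.
  field; split; [apply INR_fact_neq_0 | apply not_0_INR; lia].
Qed.

Lemma is_derive_exp_rem p s : is_derive (exp_rem (S p)) s (exp_rem p s).
Proof.
  induction p as [|p IH].
  - simpl. auto_derive; [easy | ring].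
  - exact (is_derive_minus_R (exp_rem (S p)) _ s _ _ IH (is_derive_monomial p s)).
Qed.

Lemma exp_rem_0 p : (1 <= p)%nat -> exp_rem p 0 = 0.
Proof.
  intros Hp. destruct p as [|p]; [lia|]. clear Hp.
  induction p as [|p IH]; simpl in *.
  - rewrite exp_0. field.
  - rewrite IH, Rmult_0_l. unfold Rdiv. ring.
Qed.

Lemma exp_rem_neg_sign p s : s < 0 -> 0 < (-1) ^ p * exp_rem p s.
Proof.
  revert s. induction p as [|p IH]; intros s Hs.
  - simpl. rewrite Rmult_1_l. apply exp_pos.
  - destruct (MVT_cor2 (exp_rem (S p)) (exp_rem p) s 0 Hs) as [c [Hc Hcs]].
    { intros c _. apply is_derive_Reals, is_derive_exp_rem. }
    rewrite exp_rem_0 in Hc by lia.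
    pose proof (IH c ltac:(lra)).
    replace (exp_rem (S p) s) with (exp_rem p c * s) by lra.
    replace ((-1) ^ S p * (exp_rem p c * s)) with ((-1) ^ p * exp_rem p c * - s)
      by (simpl; ring).
    apply Rmult_lt_0_compat; lra.
Qed.

Definition sym_rem (p : nat) (e s : R) : R := / 2 * (exp_rem p s - e * exp_rem p (- s)).

Lemma is_derive_sym_rem p e s : is_derive (sym_rem (S p) e) s (sym_rem p (- e) s).
Proof.
  unfold sym_rem.
  replace (exp_rem p s - - e * exp_rem p (- s)) with (exp_rem p s - e * - exp_rem p (- s))
    by ring.
  apply is_derive_scal, is_derive_minus_R; [apply is_derive_exp_rem|].
  apply is_derive_scal, is_derive_opp_arg, is_derive_exp_rem.
Qed.

Lemma sym_rem_0 p e : (1 <= p)%nat -> sym_rem p e 0 = 0.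
Proof. intros Hp. unfold sym_rem. rewrite Ropp_0, exp_rem_0 by exact Hp. ring. Qed.

Lemma pow_opp_even s j : (- s) ^ (2 * j) = s ^ (2 * j).
Proof. rewrite !pow_mult. f_equal. ring. Qed.

Lemma sym_rem_sinh k s :
  sym_rem (2 * S k) 1 s =
  (exp s - exp (- s)) / 2 - sum_f_R0 (fun i => s ^ (2 * i + 1) / INR (fact (2 * i + 1))) k.
Proof.
  induction k as [|k IH].
  - unfold sym_rem. simpl. field.
  - replace (2 * S (S k))%nat with (S (S (2 * S k))) by lia.
    rewrite tech5. replace (2 * S k + 1)%nat with (S (2 * S k)) by lia.
    rewrite Rminus_plus_distr, <- IH. unfold sym_rem. cbn [exp_rem].
    rewrite <- !tech_pow_Rmult, pow_opp_even.
    field; split; apply INR_fact_neq_0.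
Qed.

Definition Gder (n j : nat) (s : R) : R := sgn s / 2 * sym_rem (2 * n - j) ((-1) ^ j) s.

Lemma Gfun_Gder m s : (2 <= m)%nat -> Gfun m s = Gder (m - 1) 0 s.
Proof.
  intros Hm. destruct m as [|[|k]]; [lia | lia|].
  unfold Gfun, Gder. replace (S (S k) - 1)%nat with (S k) by lia.
  rewrite Nat.sub_0_r, pow_O, sym_rem_sinh.
  do 2 f_equal. unfold sum_f. replace (S k - 1)%nat with k by lia.
  apply sum_eq. intros i _. now replace (2 * (i + 1) - 1)%nat with (2 * i + 1)%nat by lia.
Qed.

Lemma is_derive_Gder n j s : (j < 2 * n)%nat -> is_derive (Gder n j) s (Gder n (S j) s).
Proof.
  intros Hj. unfold Gder.
  destruct (2 * n - j)%nat as [|p] eqn:Hp; [lia|].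
  replace (2 * n - S j)%nat with p by lia.
  replace ((-1) ^ S j) with (- (-1) ^ j) by (simpl; ring).
  apply is_derive_sgn_half_mul.
  - intros t. apply is_derive_sym_rem.
  - apply sym_rem_0. lia.
  - destruct p as [|q]; [|apply sym_rem_0; lia].
    (* [j = 2n - 1] is odd, so [sym_rem 0 1] is the odd part of [exp], vanishing at 0 *)
    replace j with (S (2 * (n - 1))) by lia.
    rewrite pow_1_odd. unfold sym_rem. simpl. rewrite Ropp_0. ring.
Qed.

Definition exp_rem_trunc (n : nat) (s : R) : R := if Rlt_dec s 0 then exp_rem n s else 0.

Lemma Gder_mid n s :
  (1 <= n)%nat -> Gder n (S n) s + Gder n n s = / 2 * exp_rem n s - exp_rem_trunc n s.
Proof.
  intros Hn.
  assert (Hsgn : Gder n (S n) s + Gder n n s = sgn s / 2 * exp_rem n s).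
  { destruct n as [|k]; [lia|]. unfold Gder, sym_rem.
    replace (2 * S k - S (S k))%nat with k by lia.
    replace (2 * S k - S k)%nat with (S k) by lia.
    cbn [exp_rem]. cbn [pow].
    replace (- s) with (-1 * s) by ring. rewrite Rpow_mult_distr.
    assert (Hc : (-1) ^ k * (-1) ^ k = 1).
    { rewrite <- Rpow_mult_distr. replace (-1 * -1) with 1 by ring. apply pow1. }
    set (c := (-1) ^ k) in *. set (a := s ^ k). set (f := INR (fact k)).
    set (r1 := exp_rem k s). set (r2 := exp_rem k (-1 * s)).
    transitivity (sgn s / 2 * (r1 - a / f) + sgn s / 2 * / 2 * (a / f) * (1 - c * c)).
    - field. apply INR_fact_neq_0.
    - rewrite Hc. ring. }
  rewrite Hsgn. unfold exp_rem_trunc.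
  destruct (Rtotal_order s 0) as [Hs | [Hs | Hs]].
  - destruct (Rlt_dec s 0); [|lra]. rewrite sgn_neg by exact Hs. field.
  - subst s. destruct (Rlt_dec 0 0); [lra|]. rewrite exp_rem_0 by exact Hn. ring.
  - destruct (Rlt_dec s 0); [lra|]. rewrite sgn_pos by exact Hs. field.
Qed.

Section ErrorKernel.

Variables (n N : nat) (x C : nat -> R).
Hypothesis n_ge_1 : (1 <= n)%nat.
Hypothesis moments_C :
  forall alpha, (alpha < n)%nat -> sum_f_R0 (fun g => C g * x g ^ alpha) N = 0.
Hypothesis exp_moment_C : sum_f_R0 (fun g => C g * exp (- x g)) N = 0.

Lemma shifted_moments_C j k a :
  (j + k < n)%nat -> sum_f_R0 (fun g => C g * (x g ^ j * (a - x g) ^ k)) N = 0.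
Proof.
  revert j. induction k as [|k IH]; intros j Hjk.
  - rewrite <- (moments_C j) by lia. apply sum_eq. intros g _. simpl. ring.
  - transitivity (a * sum_f_R0 (fun g => C g * (x g ^ j * (a - x g) ^ k)) N
                  - sum_f_R0 (fun g => C g * (x g ^ S j * (a - x g) ^ k)) N).
    + rewrite scal_sum, <- minus_sum. apply sum_eq. intros g _. simpl. ring.
    + rewrite !IH by lia. ring.
Qed.

Lemma exp_rem_moments_C p a :
  (p <= n)%nat -> sum_f_R0 (fun g => C g * exp_rem p (a - x g)) N = 0.
Proof.
  induction p as [|p IH]; intros Hp.
  - transitivity (exp a * sum_f_R0 (fun g => C g * exp (- x g)) N).
    + rewrite scal_sum. apply sum_eq. intros g _. simpl. unfold Rminus. rewrite exp_plus. ring.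
    + rewrite exp_moment_C. ring.
  - transitivity (sum_f_R0 (fun g => C g * exp_rem p (a - x g)) N
                  - / INR (fact p) * sum_f_R0 (fun g => C g * (x g ^ 0 * (a - x g) ^ p)) N).
    + rewrite scal_sum, <- minus_sum. apply sum_eq. intros g _. simpl. unfold Rdiv. ring.
    + rewrite IH, shifted_moments_C by lia. ring.
Qed.

Definition conv (j : nat) (t : R) : R := sum_f_R0 (fun g => C g * Gder n j (t - x g)) N.

Definition kern (t : R) : R := sum_f_R0 (fun g => C g * exp_rem_trunc n (t - x g)) N.

Lemma is_derive_conv j t : (j < 2 * n)%nat -> is_derive (conv j) t (conv (S j) t).
Proof.
  intros Hj. apply (is_derive_sum_f_R0 (fun g s => C g * Gder n j (s - x g))).
  intros g _. apply is_derive_scal, is_derive_shift, is_derive_Gder, Hj.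
Qed.

Lemma conv_mid t : conv (S n) t + conv n t = - kern t.
Proof.
  unfold conv, kern. rewrite <- plus_sum.
  transitivity (/ 2 * sum_f_R0 (fun g => C g * exp_rem n (t - x g)) N
                - sum_f_R0 (fun g => C g * exp_rem_trunc n (t - x g)) N).
  - rewrite scal_sum, <- minus_sum. apply sum_eq. intros g _.
    rewrite <- Rmult_plus_distr_l, Gder_mid by exact n_ge_1. ring.
  - rewrite exp_rem_moments_C by lia. ring.
Qed.

Fixpoint ibp (b p : nat) (t : R) : R :=
  match p with
  | O => exp (t - x b) * conv 0 t
  | S q => exp_rem (S q) (t - x b) * (conv (S q) t + conv q t) - ibp b q t
  end.

Lemma is_derive_ibp b p t :
  (p <= n)%nat -> is_derive (ibp b p) t (exp_rem p (t - x b) * (conv (S p) t + conv p t)).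
Proof.
  induction p as [|p IH]; intros Hp.
  - replace (exp_rem 0 (t - x b) * (conv 1 t + conv 0 t))
      with (exp (t - x b) * conv 0 t + exp (t - x b) * conv 1 t) by (simpl; ring).
    apply (is_derive_mult_R (fun s => exp (s - x b)) (conv 0)).
    + apply is_derive_shift, is_derive_exp.
    + apply is_derive_conv. lia.
  - set (W q s := conv (S q) s + conv q s).
    replace (exp_rem (S p) (t - x b) * (conv (S (S p)) t + conv (S p) t))
      with (exp_rem p (t - x b) * W p t + exp_rem (S p) (t - x b) * W (S p) t
            - exp_rem p (t - x b) * W p t) by (unfold W; ring).
    apply (is_derive_minus_R (fun s => exp_rem (S p) (s - x b) * W p s) (ibp b p));
      [|apply IH; lia].
    apply (is_derive_mult_R (fun s => exp_rem (S p) (s - x b)) (W p)).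
    + apply is_derive_shift, is_derive_exp_rem.
    + apply (is_derive_plus_R (conv (S p)) (conv p)); apply is_derive_conv; lia.
Qed.

Lemma ibp_node b p : ibp b p (x b) = (-1) ^ p * conv 0 (x b).
Proof.
  induction p as [|p IH]; cbn [ibp].
  - rewrite Rminus_diag, exp_0. ring.
  - rewrite IH, Rminus_diag, exp_rem_0 by lia. simpl. ring.
Qed.

Lemma ibp_moments_C p t : (p <= n)%nat -> sum_f_R0 (fun b => C b * ibp b p t) N = 0.
Proof.
  induction p as [|p IH]; intros Hp; cbn [ibp].
  - transitivity (conv 0 t * sum_f_R0 (fun b => C b * exp_rem 0 (t - x b)) N).
    + rewrite scal_sum. apply sum_eq. intros b _. simpl. ring.
    + rewrite exp_rem_moments_C by lia. ring.
  - transitivity ((conv (S p) t + conv p t)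
                    * sum_f_R0 (fun b => C b * exp_rem (S p) (t - x b)) N
                  - sum_f_R0 (fun b => C b * ibp b p t) N).
    + rewrite scal_sum, <- minus_sum. apply sum_eq. intros b _. ring.
    + rewrite exp_rem_moments_C, IH by lia. ring.
Qed.

Definition ibp_trunc (b : nat) (t : R) : R :=
  if Rlt_dec (t - x b) 0 then ibp b n (x b) - ibp b n t else 0.

Lemma is_derive_ibp_trunc b t : is_derive (ibp_trunc b) t (exp_rem_trunc n (t - x b) * kern t).
Proof.
  set (u s := ibp b n (x b) - ibp b n s).
  assert (Hu : forall s, is_derive u s (exp_rem n (s - x b) * kern s)).
  { intros s. replace (exp_rem n (s - x b) * kern s)
      with (0 - exp_rem n (s - x b) * (conv (S n) s + conv n s)) by (rewrite conv_mid; ring).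
    apply is_derive_minus_R; [exact (is_derive_const _ _) | apply is_derive_ibp; lia]. }
  unfold ibp_trunc, exp_rem_trunc. destruct (Rtotal_order t (x b)) as [Ht | [Ht | Ht]].
  - apply (is_derive_ext_loc u).
    + apply (filter_imp (fun s => s < x b)); [|exact (open_lt _ _ Ht)].
      intros s Hs. destruct (Rlt_dec (s - x b) 0); [reflexivity | lra].
    + destruct (Rlt_dec (t - x b) 0); [apply Hu | lra].
  - subst t. rewrite Rminus_diag. destruct (Rlt_dec 0 0); [lra|]. rewrite Rmult_0_l.
    apply (is_derive_dominated_0 _ u).
    + intros s. destruct (Rlt_dec (s - x b) 0); [apply Rle_refl|].
      rewrite Rabs_R0. apply Rabs_pos.
    + unfold u. ring.
    + specialize (Hu (x b)). rewrite Rminus_diag, exp_rem_0, Rmult_0_l in Hu by exact n_ge_1.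
      exact Hu.
  - apply (is_derive_ext_loc (fun _ => 0)).
    + apply (filter_imp (fun s => x b < s)); [|exact (open_gt _ _ Ht)].
      intros s Hs. destruct (Rlt_dec (s - x b) 0); [lra | reflexivity].
    + destruct (Rlt_dec (t - x b) 0); [lra|]. rewrite Rmult_0_l. exact (is_derive_const _ _).
Qed.

Definition kern_sq_primitive (t : R) : R := sum_f_R0 (fun b => C b * ibp_trunc b t) N.

Lemma is_derive_kern_sq_primitive t : is_derive kern_sq_primitive t (kern t ^ 2).
Proof.
  replace (kern t ^ 2)
    with (sum_f_R0 (fun b => C b * (exp_rem_trunc n (t - x b) * kern t)) N).
  - apply (is_derive_sum_f_R0 (fun b s => C b * ibp_trunc b s)).
    intros b _. apply is_derive_scal, is_derive_ibp_trunc.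
  - transitivity (kern t * kern t); [|ring].
    unfold kern at 3. rewrite scal_sum. apply sum_eq. intros b _. ring.
Qed.

Lemma kern_sq_primitive_increment :
  (forall b, (b <= N)%nat -> 0 <= x b <= 1) ->
  kern_sq_primitive 1 - kern_sq_primitive 0
  = (-1) ^ S n * sum_f_R0 (fun b => C b * conv 0 (x b)) N.
Proof.
  intros Hx.
  assert (H1 : kern_sq_primitive 1 = 0).
  { apply sum_eq_R0. intros b Hb. unfold ibp_trunc. pose proof (Hx b Hb).
    destruct (Rlt_dec (1 - x b) 0); [lra | ring]. }
  assert (H0 : kern_sq_primitive 0 = sum_f_R0 (fun b => C b * ibp b n (x b)) N
                                     - sum_f_R0 (fun b => C b * ibp b n 0) N).
  { rewrite <- minus_sum. apply sum_eq. intros b Hb. unfold ibp_trunc. pose proof (Hx b Hb).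
    destruct (Rlt_dec (0 - x b) 0); [ring|].
    replace (x b) with 0 by lra. ring. }
  rewrite H1, H0, ibp_moments_C by lia.
  replace (sum_f_R0 (fun b => C b * ibp b n (x b)) N)
    with ((-1) ^ n * sum_f_R0 (fun b => C b * conv 0 (x b)) N).
  - simpl. ring.
  - rewrite scal_sum. apply sum_eq. intros b _. rewrite ibp_node. ring.
Qed.

Lemma Phi_kern_sq_primitive :
  (forall b, (b <= N)%nat -> 0 <= x b <= 1) ->
  Phi (S n) N x C = 2 * (kern_sq_primitive 1 - kern_sq_primitive 0).
Proof.
  intros Hx. rewrite kern_sq_primitive_increment by exact Hx. unfold Phi.
  replace (sum_f_R0 (fun b => C b * conv 0 (x b)) N)
    with (sum_f_R0 (fun b => sum_f_R0 (fun g => Gfun (S n) (x b - x g) * C b * C g) N) N);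
    [ring|].
  apply sum_eq. intros b _. unfold conv. rewrite scal_sum. apply sum_eq. intros g _.
  rewrite Gfun_Gder by lia. replace (S n - 1)%nat with n by lia. ring.
Qed.

Lemma last_active_node :
  (forall i, (i <= N)%nat -> 0 <= x i) ->
  (forall i j, (i <= N)%nat -> (j <= N)%nat -> i <> j -> x i <> x j) ->
  (exists b, (b <= N)%nat /\ C b <> 0) ->
  exists b a, (b <= N)%nat /\ C b <> 0 /\ 0 <= a < x b /\
              forall g, (g <= N)%nat -> g <> b -> C g <> 0 -> x g <= a.
Proof.
  intros Hx0 Hinj [b0 [Hb0 Cb0]].
  destruct (exists_argmax (fun i => C i <> 0) x N) as [b [Hb Hmax]].
  { intros i. destruct (Req_dec (C i) 0); tauto. }
  assert (Cb : C b <> 0) by exact (proj1 (Hmax b0 Hb0 Cb0)).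
  assert (Hbelow : forall g, (g <= N)%nat -> g <> b -> C g <> 0 -> x g < x b).
  { intros g Hg Hgb Cg. pose proof (proj2 (Hmax g Hg Cg)).
    pose proof (Hinj g b Hg Hb Hgb). lra. }
  assert (Hxb : 0 < x b).
  { (* otherwise [b] is the only active node, and the zeroth moment is [C b] *)
    destruct (Rlt_le_dec 0 (x b)) as [|Hle]; [assumption|]. exfalso. apply Cb.
    rewrite <- (moments_C 0) by lia. rewrite (sum_f_R0_single _ N b Hb).
    - simpl. ring.
    - intros g Hg Hgb. destruct (Req_dec (C g) 0) as [-> | Cg]; [ring|].
      pose proof (Hbelow g Hg Hgb Cg). pose proof (Hx0 g Hg). lra. }
  destruct (exists_gap_below x N (x b)) as [a [Ha Hgap]].
  exists b, (Rmax a 0). repeat split; auto.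
  - apply Rmax_r.
  - now apply Rmax_lub_lt.
  - intros g Hg Hgb Cg. eapply Rle_trans; [apply Hgap; auto | apply Rmax_l].
Qed.

Lemma kern_sq_pos_near_last b a t :
  (b <= N)%nat -> C b <> 0 ->
  (forall g, (g <= N)%nat -> g <> b -> C g <> 0 -> x g <= a) ->
  a < t < x b -> 0 < kern t ^ 2.
Proof.
  intros Hb Cb Hgap Ht.
  assert (Hk : kern t = C b * exp_rem n (t - x b)).
  { unfold kern, exp_rem_trunc. rewrite (sum_f_R0_single _ N b Hb).
    - destruct (Rlt_dec (t - x b) 0); [reflexivity | lra].
    - intros g Hg Hgb. destruct (Req_dec (C g) 0) as [-> | Cg]; [ring|].
      pose proof (Hgap g Hg Hgb Cg). destruct (Rlt_dec (t - x g) 0); [lra | ring]. }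
  assert (Hrem : exp_rem n (t - x b) <> 0).
  { intros H0. pose proof (exp_rem_neg_sign n (t - x b)) as Hs.
    rewrite H0, Rmult_0_r in Hs. lra. }
  rewrite Hk, <- Rsqr_pow2. apply Rsqr_pos_lt, Rmult_integral_contrapositive_currified; assumption.
Qed.

End ErrorKernel.

Theorem theorem3p1 (m N : nat) (x C : nat -> R) :
  (2 <= m)%nat ->
  (forall i, (i <= N)%nat -> 0 <= x i <= 1) ->
  (forall i j, (i <= N)%nat -> (j <= N)%nat -> i <> j -> x i <> x j) ->
  (exists b, (b <= N)%nat /\ C b <> 0) ->
  S_kernel m N x C ->
  Phi m N x C > 0.
Proof.
  intros Hm Hx Hinj Hnz [Hmom Hexp].
  destruct m as [|n]; [lia|].
  assert (Hn : (1 <= n)%nat) by lia.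
  assert (Hmom' : forall alpha, (alpha < n)%nat -> sum_f_R0 (fun g => C g * x g ^ alpha) N = 0)
    by (intros alpha Ha; apply Hmom; lia).
  rewrite Phi_kern_sq_primitive by assumption.
  destruct (last_active_node n N x C Hn Hmom' (fun i Hi => proj1 (Hx i Hi)) Hinj Hnz)
    as (b & a & Hb & Cb & Ha & Hgap).
  assert (kern_sq_primitive n N x C 0 < kern_sq_primitive n N x C 1).
  { apply (is_derive_pos_lt _ (fun t => kern n N x C t ^ 2) 0 a (x b) 1).
    - intros t. apply is_derive_kern_sq_primitive; assumption.
    - intros t. apply pow2_ge_0.
    - intros t Ht. exact (kern_sq_pos_near_last n N x C b a t Hb Cb Hgap Ht).
    - lra.
    - lra.
    - apply Hx, Hb. }
  lra.
Qed.
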